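(* Let $\mathcal{H}=(\mathcal{V},\mathcal{E})$ be a PICOD hypergraph and suppose $\mathcal{V}$ is partitioned into the vertex sets $\mathcal{V}_1,\dots,\mathcal{V}_t$ of the connected components $\mathcal{H}_1=\mathcal{H}[\mathcal{V}_1],\dots,\mathcal{H}_t=\mathcal{H}[\mathcal{V}_t]$ of $\mathcal{H}$ (so every edge of $\mathcal{H}$ is contained in exactly one $\mathcal{V}_i$ and $\mathcal{H}=\bigcup_i \mathcal{H}_i$). Then for every prime power $q$, $$\beta_q(\mathcal{H})=\max_{i\in[t]}\beta_q(\mathcal{H}_i).$$
   Context: PICOD problem: a server holds $m$ messages $b_1,\dots,b_m\in\mathbb{F}_q$; there are $n$ clients, client $i$ having side-information $\{b_j: j\in S_i\}$, $S_i\subseteq[m]$, and request-set $R_i=[m]\setminus S_i$ (assumed non-empty); client $i$ wants any one message $b_j$ with $j\in R_i$. A PICOD scheme of length $\ell$ over $\mathbb{F}_q$ is an encoding map $\phi:\mathbb{F}_q^m\to\mathbb{F}_q^\ell$ (the $\ell$ broadcast symbols) such that for every client $i$ there is an index $j_i\in R_i$ and a function $\psi_i$ with $\psi_i(\phi(b),(b_k)_{k\in S_i})=b_{j_i}$ for all $b\in\mathbb{F}_q^m$. The PICOD hypergraph $\mathcal{H}$ has vertex set $[m]$ and edge set $\{R_i: i\in[n]\}$; every hypergraph defines a PICOD problem in this way. $\beta_q(\mathcal{H})$ is the minimum length of a PICOD scheme for $\mathcal{H}$ over $\mathbb{F}_q$ (equal to $0$ if there are no edges). For $\mathcal{S}\subseteq\mathcal{V}$,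 $\mathcal{H}[\mathcal{S}]$ is the hypergraph with vertex set $\mathcal{S}$ and edges $\{E\in\mathcal{E}: E\subseteq \mathcal{S}\}$. Two vertices are adjacent if some edge contains both. *)

From HB Require Import structures.
From mathcomp Require Import all_boot all_algebra all_field.
From mathcomp Require Import boolp.
Set Implicit Arguments. Unset Strict Implicit. Unset Printing Implicit Defensive.
Import GRing.Theory.
Local Open Scope ring_scope.

Section PICOD.
Variables (F : finFieldType) (V : finType).

(* the values (b_k)_{k in A}, encoded as a function that is 0 outside A *)
Definition mask (A : {set V}) (b : {ffun V -> F}) : {ffun V -> F} :=
  [ffun k => if k \in A then b k else 0].

(* A PICOD scheme of length l over F for the hypergraph with vertex set S and
   edge set Es (the messages are b_k, k in S; the encoder only sees b on S;
   the client with request set E has side information (b_k)_{k in S \ E}). *)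
Definition is_picod_scheme (S : {set V}) (Es : {set {set V}}) (l : nat)
    (phi : {ffun V -> F} -> l.-tuple F) : Prop :=
  forall E, E \in Es ->
    exists j, j \in E /\
      exists psi : l.-tuple F -> {ffun V -> F} -> F,
        forall b : {ffun V -> F}, psi (phi (mask S b)) (mask (S :\: E) b) = b j.

Definition has_picod_scheme S Es l : Prop :=
  exists phi : {ffun V -> F} -> l.-tuple F, is_picod_scheme S Es phi.

(* beta_q: minimum length of a PICOD scheme (0 if none exists, which cannot
   happen for genuine PICOD hypergraphs). *)
Definition beta (S : {set V}) (Es : {set {set V}}) : nat :=
  match pselect (exists l, `[< has_picod_scheme S Es l >]) with
  | left H => ex_minn H
  | right _ => 0%N
  end.

Definition induced_edges (Es : {set {set V}}) (S : {set V}) : {set {set V}} :=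
  [set E in Es | E \subset S].

Definition adj (Es : {set {set V}}) : rel V :=
  fun u v => [exists E in Es, (u \in E) && (v \in E)].

Definition components (Es : {set {set V}}) : {set {set V}} :=
  [set [set v | connect (adj Es) u v] | u : V].

End PICOD.

From Pilot Require Import Defs.
From HB Require Import structures.
From mathcomp Require Import all_boot all_algebra all_field.
From mathcomp Require Import boolp.
Set Implicit Arguments. Unset Strict Implicit. Unset Printing Implicit Defensive.
Import GRing.Theory.

(* (<=) Restriction: a scheme for H serves every induced sub-hypergraph H[C]:
   feed the encoder the messages masked to C; a client of H[C] then decodes
   exactly as in H.  Hence beta(H[C]) <= beta(H).
   (>=) Gluing: if the vertex set carries pairwise disjoint blocks C, every
   edge lies in one block, and each H[C] has a scheme of a common length l,
   then broadcasting the coordinatewise SUM of the block encodings is a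
   scheme of length l for H.  A client whose request set lies in block C
   knows all messages of the other blocks (they are disjoint from its
   request set), so it can subtract their contributions and run the decoder
   of H[C].  Shorter schemes are padded to length l = max_i beta(H_i).
   Connected components are such a family of blocks.  Finally, beta is
   attained because the uncoded scheme of length |V| always works when
   every request set is non-empty. *)

Section Schemes.
Variables (F : finFieldType) (V : finType).
Implicit Types (S C E : {set V}) (Es : {set {set V}}) (b : {ffun V -> F}).

Lemma mask_mask (A B : {set V}) b :
  Defs.mask A (Defs.mask B b) = Defs.mask (A :&: B) b.
Proof.
apply/ffunP => k; rewrite !ffunE inE.
by case: (k \in A); case: (k \in B).
Qed.

Lemma mask_side_info_disjoint (D E : {set V}) b :
  [disjoint D & E] -> Defs.mask D (Defs.mask ([set: V] :\: E) b) = Defs.mask D b.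
Proof.
by rewrite disjoints_subset mask_mask setTD => /setIidPl ->.
Qed.

Lemma beta_le S Es l : has_picod_scheme F S Es l -> (beta F S Es <= l)%N.
Proof.
move=> Hl; rewrite /beta; case: pselect => [ex|nex].
  by case: ex_minnP => m _; apply; apply/asboolP.
by exfalso; apply: nex; exists l; apply/asboolP.
Qed.

Lemma beta_spec S Es l :
  has_picod_scheme F S Es l -> has_picod_scheme F S Es (beta F S Es).
Proof.
move=> Hl; rewrite /beta; case: pselect => [ex|nex].
  by case: ex_minnP => m /asboolP.
by exfalso; apply: nex; exists l; apply/asboolP.
Qed.

Lemma has_picod_pad S Es l l' :
  has_picod_scheme F S Es l -> (l <= l')%N -> has_picod_scheme F S Es l'.
Proof.
move=> [phi Hphi] le_ll'.
exists (fun b => [tuple nth 0%R (phi b) i | i < l']) => E HE.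
have [j [Hj [psi Hpsi]]] := Hphi E HE.
exists j; split => //.
exists (fun t s => psi [tuple nth 0%R t i | i < l] s) => b.
rewrite -[RHS](Hpsi b); congr psi; apply: eq_from_tnth => i.
rewrite tnth_mktuple (tnth_nth 0%R) /=.
by rewrite (nth_mktuple _ 0%R (widen_ord le_ll' i)).
Qed.

(* The uncoded scheme broadcasting every message: it works whenever every
   request set is non-empty, so beta is then a genuine minimum. *)
Lemma has_picod_uncoded Es :
  (forall E, E \in Es -> E != set0) -> has_picod_scheme F [set: V] Es #|V|.
Proof.
move=> Hne.
exists (fun b => [tuple b (enum_val i) | i < #|V|]) => E HE.
have /set0Pn [j Hj] := Hne E HE.
exists j; split => //.
exists (fun t _ => tnth t (enum_rank j)) => b.
by rewrite tnth_mktuple enum_rankK ffunE inE.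
Qed.

Lemma has_picod_restrict Es C l :
  has_picod_scheme F [set: V] Es l ->
  has_picod_scheme F C (induced_edges Es C) l.
Proof.
move=> [phi Hphi].
exists (fun b => phi (Defs.mask C b)) => E; rewrite inE => /andP [HE sub_EC].
have [j [Hj [psi Hpsi]]] := Hphi E HE.
exists j; split => //; exists psi => b.
have := Hpsi (Defs.mask C b).
rewrite !mask_mask setTI setIid ffunE (subsetP sub_EC _ Hj) => <-.
by rewrite setTD setDE setIC.
Qed.

Lemma has_picod_glue Es (P : {set {set V}}) l :
  trivIset P ->
  (forall E, E \in Es -> exists2 C, C \in P & E \subset C) ->
  (forall C, C \in P -> has_picod_scheme F C (induced_edges Es C) l) ->
  has_picod_scheme F [set: V] Es l.
Proof.
move=> /trivIsetP disjP cover_Es schemes.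
have schemes_all C : exists phiC : {ffun V -> F} -> l.-tuple F,
    C \in P -> is_picod_scheme C (induced_edges Es C) phiC.
  case: (boolP (C \in P)) => [/schemes [phiC HphiC] | _]; first by exists phiC.
  by exists (fun _ => [tuple 0%R | _ < l]).
have [phi Hphi] := choice schemes_all.
pose enc b i := (\sum_(C in P) tnth (phi C (Defs.mask C b)) i)%R.
exists (fun b => [tuple enc b i | i < l]) => E HE.
have [C HC sub_EC] := cover_Es E HE.
have [|j [Hj [psi Hpsi]]] := Hphi C HC E; first by rewrite inE HE sub_EC.
exists j; split => //.
(* the contribution of the blocks other than C, known to the client *)
pose others s i := (\sum_(D in P | D != C) tnth (phi D (Defs.mask D s)) i)%R.
exists (fun t s => psi [tuple tnth t i - others s i | i < l] (Defs.mask C s))%R.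
move=> b; rewrite -[RHS](Hpsi b).
have others_known i : others (Defs.mask ([set: V] :\: E) b) i = others b i.
  apply: eq_bigr => D /andP [HD neq_DC].
  rewrite mask_side_info_disjoint //.
  exact: disjointWr sub_EC (disjP D C HD HC neq_DC).
congr psi; last by rewrite mask_mask setTD setDE.
apply: eq_from_tnth => i; rewrite !tnth_mktuple others_known.
rewrite /enc; under eq_bigr do rewrite mask_mask setIT.
by rewrite (bigD1 C HC) /= addrK.
Qed.

End Schemes.

Section Components.
Variables (V : finType) (Es : {set {set V}}).

Lemma adj_sym : symmetric (adj Es).
Proof.
move=> u v; apply/existsP/existsP => -[E /and3P [HE Hu Hv]];
  by exists E; rewrite HE Hu Hv.
Qed.

Lemma components_trivIset : trivIset (components Es).
Proof.
have cs := sym_connect_sym adj_sym.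
apply/trivIsetP => _ _ /imsetP [u _ ->] /imsetP [w _ ->] neq_uw.
apply/pred0P => x /=; rewrite !inE; apply/negbTE/negP => /andP [Hux Hwx].
move/negP: neq_uw; apply; apply/eqP/setP => v; rewrite !inE.
have Huw : connect (adj Es) u w by rewrite (connect_trans Hux) // cs.
by apply/idP/idP => H; [rewrite (connect_trans _ H) // cs | exact: connect_trans H].
Qed.

Lemma edge_in_component E : E \in Es -> E != set0 ->
  exists2 C, C \in components Es & E \subset C.
Proof.
move=> HE /set0Pn [u Hu].
exists [set v | connect (adj Es) u v]; first by apply/imsetP; exists u.
apply/subsetP => v Hv; rewrite inE; apply: connect1.
by apply/existsP; exists E; rewrite HE Hu Hv.
Qed.

End Components.

Theorem proposition1 (F : finFieldType) (V : finType) (Es : {set {set V}}) :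
  (forall E, E \in Es -> E != set0) ->
  beta F [set: V] Es =
  (\max_(C in components Es) beta F C (induced_edges Es C))%N.
Proof.
move=> Hne.
have uncoded := has_picod_uncoded F Hne.
have component_scheme C : has_picod_scheme F C (induced_edges Es C)
    (beta F C (induced_edges Es C)).
  exact/beta_spec/has_picod_restrict/uncoded.
apply/eqP; rewrite eqn_leq; apply/andP; split.
- apply/beta_le/(has_picod_glue (components_trivIset Es)).
    by move=> E HE; apply: edge_in_component HE (Hne E HE).
  move=> C HC; apply: has_picod_pad (component_scheme C) _.
  exact: (@leq_bigmax_cond _ _ (fun C => beta F C (induced_edges Es C)) C HC).
- apply/bigmax_leqP => C _; apply/beta_le/has_picod_restrict.
  exact: beta_spec uncoded.
Qed.
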